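(* Let $\Gamma$ be a countable discrete group and $\mu$ a symmetric probability measure on $\Gamma$. If $0\neq T\in\mathcal B(\ell^2(\Gamma))$ and $\lambda\in\mathbb T$ satisfy $\mathcal P_\mu(T)=\lambda T$, then $\lambda\in\{1,-1\}$.
   Context: $\rho$ denotes the right regular representation of $\Gamma$ on $\ell^2(\Gamma)$, $\rho_g\delta_x=\delta_{xg^{-1}}$. The Markov operator $\mathcal P_\mu:\mathcal B(\ell^2(\Gamma))\to\mathcal B(\ell^2(\Gamma))$ is $\mathcal P_\mu(T)=\sum_{g\in\Gamma}\mu(g)\rho_gT\rho_g^*$. $\mu$ is symmetric if $\mu(g)=\mu(g^{-1})$ for all $g\in\Gamma$. *)

From mathcomp Require Import all_boot all_order all_algebra.
From mathcomp Require Import reals.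
From mathcomp Require Export complex.
Set Implicit Arguments. Unset Strict Implicit. Unset Printing Implicit Defensive.
Import Order.TTheory GRing.Theory Num.Theory.
Local Open Scope ring_scope.
Local Open Scope complex_scope.

Record cgroup := CGroup {
  cg_sort :> countType;
  cg_mul : cg_sort -> cg_sort -> cg_sort;
  cg_one : cg_sort;
  cg_inv : cg_sort -> cg_sort;
  cg_mulA : associative cg_mul;
  cg_mul1g : left_id cg_one cg_mul;
  cg_mulVg : forall x, cg_mul (cg_inv x) x = cg_one }.

Section Defs.
Variable R : realType.
Variable G : cgroup.
Local Notation C := R[i].

Definition cvgC (u : nat -> C) (L : C) : Prop :=
  forall e : R, 0 < e -> exists N : nat, forall n : nat, (N <= n)%N -> `|u n - L| < e%:C.

Definition cvgR (u : nat -> R) (L : R) : Prop :=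
  forall e : R, 0 < e -> exists N : nat, forall n : nat, (N <= n)%N -> `|u n - L| < e.

(* partial sums of a family indexed by the countable group, along the
   enumeration of G given by pickle (each element occurs exactly once) *)
Definition psumR (f : G -> R) (n : nat) : R :=
  \sum_(k < n) oapp f 0 (@pickle_inv G k).
Definition psumC (f : G -> C) (n : nat) : C :=
  \sum_(k < n) oapp f 0 (@pickle_inv G k).

Definition symmetric_prob (mu : G -> R) : Prop :=
  [/\ forall g, 0 <= mu g, cvgR (psumR mu) 1 & forall g, mu (@cg_inv G g) = mu g].

(* An operator T on l^2(G) is represented by its matrix coefficients
   T x y = < T delta_y , delta_x >.  Boundedness of the operator: the sesquilinear
   form is bounded on finitely supported vectors. *)
Definition bounded_op (T : G -> G -> C) : Prop :=
  exists M : R, forall (s : seq G) (u v : G -> C), uniq s ->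
    `| \sum_(x <- s) \sum_(y <- s) (v x)^* * T x y * u y | ^+ 2
      <= (M ^+ 2)%:C * (\sum_(y <- s) `|u y| ^+ 2) * (\sum_(x <- s) `|v x| ^+ 2).

(* rho_g delta_x = delta_{x g^-1}; hence the (x,y) coefficient of
   rho_g T rho_g^* is T (x g) (y g), and the (x,y) coefficient of
   P_mu(T) = sum_g mu(g) rho_g T rho_g^* is sum_g mu(g) T (x g) (y g). *)
Definition markov_coef_psum (mu : G -> R) (T : G -> G -> C) (x y : G) : nat -> C :=
  psumC (fun g => (mu g)%:C * T (@cg_mul G x g) (@cg_mul G y g)).

Definition markov_eigen (mu : G -> R) (T : G -> G -> C) (lam : C) : Prop :=
  forall x y : G, cvgC (markov_coef_psum mu T x y) (lam * T x y).

End Defs.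

(* Let M be the supremum of the coefficients |T x y|, and call M^2 - |T x y|^2
   the defect of (x, y).  By P_mu(T) = lam T, the values T (x g) (y g) have
   mu-mean lam (T x y), whose modulus is |T x y|; so their mu-variance is at most
   the defect, and so is each single term mu g |T (x g) (y g) - lam (T x y)|^2.
   Fix g with mu g > 0.  Applying this at (x, y) with g^-1 (same mass, by
   symmetry) and at (x g^-1, y g^-1) with g shows that, when the defect of
   (x, y) is small, T (x g^-1) (y g^-1) is close to lam (T x y) and T x y is
   close to lam T (x g^-1) (y g^-1), hence to lam^2 (T x y).  Letting |T x y|
   tend to M > 0 gives lam^2 = 1. *)

From mathcomp Require Import all_boot all_order all_algebra.
From mathcomp Require Import reals complex.
From mathcomp Require Import boolp classical_sets.
From mathcomp Require Import ring lra.
Import Order.TTheory GRing.Theory Num.Theory Normc.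
Set Implicit Arguments. Unset Strict Implicit. Unset Printing Implicit Defensive.
Local Open Scope ring_scope.
Local Open Scope complex_scope.
Local Notation Re := (@complex.Re _).
Local Notation Im := (@complex.Im _).

Section CGroup.
Variable G : cgroup.
Local Notation mul := (@cg_mul G).
Local Notation inv := (@cg_inv G).

Lemma cg_mulgV (x : G) : mul x (inv x) = cg_one G.
Proof.
set y := mul x (inv x).
have yy : mul y y = y by rewrite /y -cg_mulA (cg_mulA (inv x)) cg_mulVg cg_mul1g.
by rewrite -(cg_mul1g y) -{1}(cg_mulVg y) -cg_mulA yy cg_mulVg.
Qed.

Lemma cg_mulg1 (x : G) : mul x (cg_one G) = x.
Proof. by rewrite -(cg_mulVg x) cg_mulA cg_mulgV cg_mul1g. Qed.

Lemma cg_mulgVK (x y : G) : mul (mul x (inv y)) y = x.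
Proof. by rewrite -cg_mulA cg_mulVg cg_mulg1. Qed.

End CGroup.

Section RealEpsilon.
Variable R : realFieldType.

Lemma ler_addmulgt0r (k x y : R) :
  0 <= k -> (forall e, 0 < e -> x <= y + k * e) -> x <= y.
Proof.
move=> k0 hxy; apply/ler_addgt0Pr => e e0.
have k1 : 0 < k + 1 by rewrite ltr_wpDl.
apply: (le_trans (hxy _ (divr_gt0 e0 k1))).
by rewrite lerD2l mulrCA ger_pMr // ler_pdivrMr // mul1r lerDl ler01.
Qed.

Lemma le0_of_small_defect (x c k : R) : 0 < c -> 0 <= k ->
  (forall eta, 0 < eta -> exists delta d,
     [/\ 0 <= d, delta < eta, c * d ^+ 2 <= delta & x <= k * (delta + d)]) ->
  x <= 0.
Proof.
move=> c0 k0 hsmall; apply: (ler_addmulgt0r (k := k * (c + 1))) => [|e e0].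
  by rewrite mulr_ge0 // addr_ge0 // ltW.
set eps := Num.min e 1.
have eps0 : 0 < eps by rewrite lt_min e0 ltr01.
have eps_le1 : eps <= 1 by rewrite ge_min lexx orbT.
have eps_le : eps <= e by rewrite ge_min lexx.
have [delta [d [d0 delta_lt dle le_x]]] :=
  hsmall (c * eps ^+ 2) (mulr_gt0 c0 (exprn_gt0 _ eps0)).
have d_lt : d < eps.
  rewrite -(@ltr_pXn2r _ 2) // ?nnegrE ?(ltW eps0) // -(ltr_pM2l c0).
  exact: le_lt_trans dle delta_lt.
have c_eps : c * eps ^+ 2 <= c * e.
  by rewrite ler_pM2l // expr2 (le_trans _ eps_le) // ger_pMr.
have : delta + d <= (c + 1) * e by lra.
by rewrite add0r -mulrA => /(ler_wpM2l k0); apply: le_trans.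
Qed.

End RealEpsilon.

Section ComplexNorm.
Variable R : rcfType.
Implicit Types z w : R[i].

Lemma normr_normc z : `|z| = (normc z)%:C.
Proof. by case: z => a b; rewrite normc_def. Qed.

Lemma normc_ge0 z : 0 <= normc z.
Proof. by case: z => a b; apply: sqrtr_ge0. Qed.

Lemma normc_sqr z : normc z ^+ 2 = Re z ^+ 2 + Im z ^+ 2.
Proof. by case: z => a b; rewrite /= sqr_sqrtr // addr_ge0 ?sqr_ge0. Qed.

Lemma normc_Re_le z : `|Re z| <= normc z.
Proof.
rewrite -sqrtr_sqr -[normc z]ger0_norm ?normc_ge0 // -sqrtr_sqr normc_sqr.
by rewrite ler_sqrt ?addr_ge0 ?sqr_ge0 // lerDl sqr_ge0.
Qed.

Lemma Re_conjc_mulr z : Re (z^* * z) = normc z ^+ 2.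
Proof. by case: z => a b; rewrite normc_sqr /=; ring. Qed.

Lemma normc_conjc z : normc z^* = normc z.
Proof. by case: z => a b; rewrite /= sqrrN. Qed.

Lemma mulr_normc_subr_sqr_le (m k : R) z w : 0 <= m -> normc z <= k ->
  m * normc (z - w) ^+ 2 <= m * (k ^+ 2 + normc w ^+ 2) - 2 * Re (w^* * (m%:C * z)).
Proof.
move=> m0 zk; have z0 := normc_ge0 z.
have : normc z ^+ 2 <= k ^+ 2 by nra.
by case: z w {zk z0} => a b [c d]; rewrite !normc_sqr /= => zk; nra.
Qed.

End ComplexNorm.

Section PartialSums.
Variables (R : realType) (G : cgroup).
Implicit Types (f : G -> R) (h : G -> R[i]).

Lemma psumR_ge_term f g n :
  (forall x, 0 <= f x) -> (pickle g < n)%N -> f g <= psumR f n.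
Proof.
move=> f_ge0 gn; rewrite /psumR (bigD1 (Ordinal gn)) //= pickleK_inv /= lerDl.
by apply: sumr_ge0 => k _; case: pickle_inv.
Qed.

Lemma ler_psumR (f f' : G -> R) n :
  (forall x, f x <= f' x) -> psumR f n <= psumR f' n.
Proof. by move=> le_ff'; apply: ler_sum => k _; case: pickle_inv. Qed.

Lemma psumR_affine f h (k a : R) (z : R[i]) n :
  psumR (fun g => f g * k - a * Re (z * h g)) n
  = psumR f n * k - a * Re (z * psumC h n).
Proof.
rewrite /psumR /psumC mulr_suml mulr_sumr raddf_sum mulr_sumr -sumrB.
by apply: eq_bigr => i _; case: pickle_inv => /=; rewrite ?mul0r ?mulr0 ?subrr.
Qed.

Lemma psumR_cvg_neq0 f (L : R) : cvgR (psumR f) L -> L != 0 -> exists g, f g != 0.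
Proof.
move=> f_cvg L0; apply/not_existsP => f0.
have [N hN] := f_cvg `|L| ltac:(by rewrite normr_gt0).
have := hN N (leqnn N); rewrite /psumR big1 ?sub0r ?normrN ?ltxx //.
by move=> k _; case: pickle_inv => //= g; apply/eqP/negbNE/negP; exact: f0.
Qed.

End PartialSums.

Section WeightedDeviation.
Variables (R : realType) (G : cgroup) (m : G -> R) (c : G -> R[i]) (w : R[i]) (K : R).
Hypotheses (m_ge0 : forall g, 0 <= m g) (m_sum1 : cvgR (psumR m) 1).
Hypotheses (c_le : forall g, normc (c g) <= K).
Hypothesis mc_sum : cvgC (psumC (fun g => (m g)%:C * c g)) w.

Lemma weighted_dev_le g : m g * normc (c g - w) ^+ 2 <= K ^+ 2 - normc w ^+ 2.
Proof.
set K2 := K ^+ 2 + normc w ^+ 2.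
have K2_ge0 : 0 <= K2 by rewrite addr_ge0 ?sqr_ge0.
have w_ge0 := normc_ge0 w.
apply: (ler_addmulgt0r (k := K2 + 2 * normc w)) => [|e e0]; first lra.
have [N1 S_near] := m_sum1 e0; have [N2 P_near] := mc_sum e0.
pose n := maxn (pickle g).+1 (maxn N1 N2).
have S_le : psumR m n <= 1 + e.
  have /ltr_normlP [_] := S_near n (leq_trans (leq_maxl N1 N2) (leq_maxr _ _)); lra.
pose P := psumC (fun g => (m g)%:C * c g) n.
have P_near' : normc (P - w) < e.
  by rewrite -ltcR -normr_normc P_near // (leq_trans (leq_maxr N1 N2) (leq_maxr _ _)).
have ReP_ge : normc w ^+ 2 - normc w * e <= Re (w^* * P).
  have -> : Re (w^* * P) = normc w ^+ 2 + Re (w^* * (P - w)).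
    by rewrite mulrBr raddfB /= Re_conjc_mulr addrC subrK.
  rewrite lerD2l; have /ler_normlP [+ _] := normc_Re_le (w^* * (P - w)).
  rewrite normcM normc_conjc => le_Re.
  have : normc w * normc (P - w) <= normc w * e by rewrite ler_wpM2l // ltW.
  lra.
apply: (le_trans (psumR_ge_term (f := fun x => m x * normc (c x - w) ^+ 2) _
  (leq_maxl _ (maxn N1 N2)))) => [x|]; first by rewrite mulr_ge0 ?sqr_ge0.
apply: le_trans (ler_psumR _ (fun x => mulr_normc_subr_sqr_le w (m_ge0 x) (c_le x))) _.
rewrite -/K2 psumR_affine -/P.
have : psumR m n * K2 <= (1 + e) * K2 by rewrite ler_wpM2r.
rewrite -/n /K2; nra.
Qed.

End WeightedDeviation.

Lemma sum_seq_supp1 (V : nmodType) (I : eqType) (s : seq I) (a : I) (F : I -> V) :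
  uniq s -> a \in s -> (forall i, i != a -> F i = 0) -> \sum_(i <- s) F i = F a.
Proof. by move=> s_uniq a_s F0; rewrite (bigD1_seq a) //= big1 ?addr0. Qed.

Lemma bounded_op_normc_le (R : realType) (G : cgroup) (T : G -> G -> R[i]) :
  bounded_op T -> exists B, forall x y, normc (T x y) <= B.
Proof.
case=> B T_le; exists `|B| => x y.
pose s := undup [:: x; y]; have s_uniq : uniq s := undup_uniq _.
have [xs ys] : x \in s /\ y \in s by rewrite !mem_undup !inE !eqxx orbT.
have := T_le s (fun z => (z == y)%:R) (fun z => (z == x)%:R) s_uniq.
have delta_sqr (a z : G) : z != a -> `|(z == a)%:R : R[i]| ^+ 2 = 0.
  by move/negbTE ->; rewrite normr0 expr0n.
rewrite (sum_seq_supp1 (a := x)) //; last first.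
  by move=> z /negbTE zx; rewrite big1 // => t _; rewrite zx mulr0n raddf0 !mul0r.
rewrite (sum_seq_supp1 (a := y)) //; last by move=> z /negbTE ->; rewrite mulr0.
rewrite (sum_seq_supp1 s_uniq ys (delta_sqr y)) (sum_seq_supp1 s_uniq xs (delta_sqr x)).
rewrite (eqxx x) (eqxx y) mulr1n rmorph1 normr1 expr1n !mulr1 mul1r.
rewrite normr_normc -rmorphXn lecR -(real_normK (num_real B)).
by rewrite ler_sqr ?nnegrE ?normc_ge0.
Qed.

Section MarkovEigenvalue.
Variables (R : realType) (G : cgroup) (mu : G -> R) (T : G -> G -> R[i]) (lam : R[i]).
Hypotheses (mu_ge0 : forall g, 0 <= mu g) (mu_sum1 : cvgR (psumR mu) 1).
Hypothesis mu_sym : forall g, mu (@cg_inv G g) = mu g.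
Hypothesis T_bounded : bounded_op T.
Hypothesis lam_norm1 : normc lam = 1.
Hypothesis T_eigen : markov_eigen mu T lam.

Local Notation mul := (@cg_mul G).
Local Notation inv := (@cg_inv G).
Local Notation coefs := (range (fun pq : G * G => normc (T pq.1 pq.2))).

Definition coef_sup : R := sup coefs.
Local Notation M := coef_sup.

Definition coef_defect p q : R := M ^+ 2 - normc (T p q) ^+ 2.

Lemma has_sup_coefs : has_sup coefs.
Proof.
split; first by exists (normc (T (cg_one G) (cg_one G))), (cg_one G, cg_one G).
have [B T_le] := bounded_op_normc_le T_bounded.
by exists B => _ [[p q] _ <-]; apply: T_le.
Qed.

Lemma normc_le_coef_sup p q : normc (T p q) <= M.
Proof. by apply: sup_upper_bound; [exact: has_sup_coefs | exists (p, q)]. Qed.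

Lemma coef_sup_ge0 : 0 <= M.
Proof. exact: le_trans (normc_ge0 _) (normc_le_coef_sup (cg_one G) (cg_one G)). Qed.

Lemma coef_sup_gt0 : (exists p q, T p q != 0) -> 0 < M.
Proof.
case=> p [q Tpq]; apply: lt_le_trans (normc_le_coef_sup p q).
by rewrite lt_def normc_ge0 andbT; apply: contra Tpq => /eqP/eq0_normc ->.
Qed.

Lemma coef_defect_ge0 p q : 0 <= coef_defect p q.
Proof.
rewrite subr_ge0 ler_sqr ?nnegrE ?normc_ge0 ?coef_sup_ge0 //.
exact: normc_le_coef_sup.
Qed.

Lemma coef_defect_small eta : 0 < eta -> exists p q, coef_defect p q < eta.
Proof.
move=> eta0; have M0 := coef_sup_ge0.
have M1 : 0 < 2 * M + 1 by lra.
have [_ [[p q] _ <-]] := sup_adherent (divr_gt0 eta0 M1) has_sup_coefs.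
rewrite -/M /= => near; exists p, q; rewrite /coef_defect.
have a0 := normc_ge0 (T p q); have aM := normc_le_coef_sup p q.
have : (M - normc (T p q)) * (2 * M + 1) < eta by rewrite -ltr_pdivlMr //; lra.
nra.
Qed.

Lemma markov_dev_le p q g :
  mu g * normc (T (mul p g) (mul q g) - lam * T p q) ^+ 2 <= coef_defect p q.
Proof.
rewrite /coef_defect -[normc (T p q)]mul1r -lam_norm1 -normcM.
exact: weighted_dev_le mu_ge0 mu_sum1 (fun g => normc_le_coef_sup _ _) (T_eigen p q) g.
Qed.

Lemma lam_sqr_defect_le p q g :
  mu g * normc (1 - lam ^+ 2) ^+ 2 * normc (T p q) ^+ 2
  <= 4 * coef_defect p q
     + 4 * M * normc (T (mul p (inv g)) (mul q (inv g)) - lam * T p q).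
Proof.
set h := inv g; set a := T p q; set b := T (mul p h) (mul q h).
set s := normc (1 - lam ^+ 2); set d := normc (b - lam * a).
set d' := normc (a - lam * b).
have dev_ab : mu g * d ^+ 2 <= coef_defect p q.
  by rewrite -mu_sym; apply: markov_dev_le.
have dev_ba : mu g * d' ^+ 2 <= coef_defect (mul p h) (mul q h).
  by have := markov_dev_le (mul p h) (mul q h) g; rewrite !cg_mulgVK.
have le_ab : normc a <= normc b + d.
  rewrite -[normc a]mul1r -lam_norm1 -normcM.
  have -> : lam * a = b + - (b - lam * a) by ring.
  by rewrite -[d]normcN; apply: le_normcD.
have le_sa : s * normc a <= d' + d.
  rewrite /s -normcM -[d]mul1r -lam_norm1 -normcM.
  have -> : (1 - lam ^+ 2) * a = (a - lam * b) + lam * (b - lam * a) by ring.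
  exact: le_normcD.
move: dev_ab dev_ba; rewrite /coef_defect -/a -/b => dev_ab dev_ba.
have [a0 b0] := (normc_ge0 a, normc_ge0 b).
have [d0 d'0] := (normc_ge0 (b - lam * a), normc_ge0 (a - lam * b)).
have [aM bM] := (normc_le_coef_sup p q, normc_le_coef_sup (mul p h) (mul q h)).
have sqr_sa : (s * normc a) ^+ 2 <= (d' + d) ^+ 2.
  by rewrite ler_sqr ?nnegrE ?mulr_ge0 ?addr_ge0 ?normc_ge0.
have mu_sqr : mu g * (d' + d) ^+ 2 <= 2 * (mu g * d' ^+ 2) + 2 * (mu g * d ^+ 2).
  have : 0 <= mu g * (d' - d) ^+ 2 by rewrite mulr_ge0 ?sqr_ge0.
  lra.
have sqr_ab : normc a ^+ 2 - normc b ^+ 2 <= 2 * M * d.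
  have : 0 <= (normc b + d - normc a) * (normc a + normc b).
    by rewrite mulr_ge0 ?subr_ge0 ?addr_ge0.
  have : 0 <= (2 * M - normc a - normc b) * d by rewrite mulr_ge0 //; lra.
  lra.
have : mu g * (s * normc a) ^+ 2 <= mu g * (d' + d) ^+ 2 by rewrite ler_wpM2l.
rewrite /coef_defect exprMn; lra.
Qed.

Lemma lam_sqr_eq1 : (exists p q, T p q != 0) -> lam ^+ 2 = 1.
Proof.
move=> T_neq0; have M0 := coef_sup_gt0 T_neq0.
have [g mu_g0] : exists g, 0 < mu g.
  have [g mu_g] := psumR_cvg_neq0 mu_sum1 (oner_neq0 R).
  by exists g; rewrite lt_def mu_g mu_ge0.
set s := normc (1 - lam ^+ 2).
suff : mu g * M ^+ 2 * s ^+ 2 <= 0.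
  rewrite pmulr_rle0 ?mulr_gt0 ?exprn_gt0 // => s_le0.
  apply/eqP; rewrite eq_sym -subr_eq0; apply/eqP/eq0_normc.
  by apply/eqP; rewrite -sqrf_eq0 eq_le s_le0 sqr_ge0.
have mus0 : 0 <= mu g * s ^+ 2 by rewrite mulr_ge0 ?sqr_ge0 // ltW.
apply: (le0_of_small_defect (c := mu g) (k := 4 + mu g * s ^+ 2 + 4 * M)) => //.
  lra.
move=> eta eta0; have [p [q small]] := coef_defect_small eta0.
set d := normc (T (mul p (inv g)) (mul q (inv g)) - lam * T p q).
exists (coef_defect p q), d; split => //; first exact: normc_ge0.
  by rewrite -mu_sym; apply: markov_dev_le.
have := lam_sqr_defect_le p q g; rewrite -/s -/d.
have := coef_defect_ge0 p q; have : 0 <= d := normc_ge0 _.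
have -> : normc (T p q) ^+ 2 = M ^+ 2 - coef_defect p q by rewrite /coef_defect; ring.
nra.
Qed.

End MarkovEigenvalue.

Theorem theorem2p3 (R : realType) (G : cgroup) (mu : G -> R) (T : G -> G -> R[i])
    (lam : R[i]) :
  symmetric_prob mu ->
  bounded_op T ->
  (exists x y : G, T x y != 0) ->
  `|lam| = 1 ->
  markov_eigen mu T lam ->
  lam = 1 \/ lam = -1.
Proof.
case=> mu_ge0 mu_sum1 mu_sym T_bounded T_neq0 lam_norm1 T_eigen.
have lam_normc1 : normc lam = 1 by apply: complexI; rewrite -normr_normc.
have /eqP := lam_sqr_eq1 mu_ge0 mu_sum1 mu_sym T_bounded lam_normc1 T_eigen T_neq0.
by rewrite sqrf_eq1 => /orP [/eqP | /eqP]; [left | right].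
Qed.
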